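(* Let $G=(V,E)$ be a mobility graph and fix parameters $L\ge1$, $\tau\ge1$. Define $f:2^V\to\mathbb{R}_{\ge0}$ by $f(S)=\sum_{v\in V}\sqrt{\ell(v,\tau,S)}$. Then $f$ is monotone, i.e. $f(S\cup\{v\})\ge f(S)$ for all $S\subseteq V$, $v\in V$, and submodular, i.e. $f(S\cup\{v\})-f(S)\ge f(T\cup\{v\})-f(T)$ for all $S\subseteq T\subseteq V$ and $v\in V\setminus T$.
   Context: A mobility graph is a directed graph $G=(V,E)$ (self-loops allowed) with a probability $p_e\in[0,1]$ on each edge $e$, such that for each $u\in V$, $\sum_{v\in\Gamma^{OUT}(u)} p_{(u,v)}=1$, where $\Gamma^{OUT}(u)=\{w:(u,w)\in E\}$ and $\Gamma^{IN}(v)=\{w:(w,v)\in E\}$. For a seed set $S\subseteq V$ and integer $L\ge1$, the loads are defined by $\ell(v,0,S)=L$ if $v\in S$, $\ell(v,0,S)=0$ otherwise, and for $t\ge1$, $\ell(v,t,S)=\sum_{u\in\Gamma^{IN}(v)} p_{(u,v)}\,\ell(u,t-1,S)$ for all $v\in V$. *)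

From mathcomp Require Import all_boot all_order all_algebra.
Set Implicit Arguments. Unset Strict Implicit. Unset Printing Implicit Defensive.
Import Order.TTheory GRing.Theory Num.Theory.
Local Open Scope ring_scope.

(* A mobility graph on a finite vertex set V: a directed edge relation E
   (self-loops allowed) and edge probabilities p with p (u,v) in [0,1] for
   (u,v) in E, and sum over out-neighbours equal to 1.  p is given as a total
   function V -> V -> R; its values off E are irrelevant (we require them 0). *)
Definition out_nbrs (V : finType) (E : rel V) (u : V) : {set V} := [set w | E u w].
Definition in_nbrs (V : finType) (E : rel V) (v : V) : {set V} := [set w | E w v].

Definition mobility_graph (R : numDomainType) (V : finType) (E : rel V)
  (p : V -> V -> R) : Prop :=
  (forall u v, E u v -> 0 <= p u v <= 1) /\
  (forall u, \sum_(v in out_nbrs E u) p u v = 1).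

Fixpoint load (R : numDomainType) (V : finType) (E : rel V) (p : V -> V -> R)
  (L : nat) (t : nat) (S : {set V}) (v : V) : R :=
  match t with
  | 0 => if v \in S then L%:R else 0
  | t'.+1 => \sum_(u in in_nbrs E v) p u v * load E p L t' S u
  end.

Definition f_sqrt (R : rcfType) (V : finType) (E : rel V) (p : V -> V -> R)
  (L tau : nat) (S : {set V}) : R :=
  \sum_(v : V) Num.sqrt (load E p L tau S v).

From mathcomp Require Import all_boot all_order all_algebra.
From mathcomp Require Import ring lra.
Import Order.TTheory GRing.Theory Num.Theory.
Local Open Scope ring_scope.

(* The load ell(x,t,S) is built from the seed indicator by t rounds of
   nonnegative linear combinations, hence it is
   (1) nonnegative,
   (2) monotone in the seed set S, and
   (3) additive: for v outside S, ell(x,t,S+v) = ell(x,t,S) + ell(x,t,{v}).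
   Monotonicity of f = sum_x sqrt(ell(x,tau,.)) follows from (2) since sqrt
   is increasing.  For submodularity, by (3) the marginal gain of v at x is
   sqrt(ell_S + d) - sqrt(ell_S) with the same increment d = ell(x,tau,{v})
   for S and for T; by (2) ell_S <= ell_T, and increments of the concave
   function sqrt by a fixed d >= 0 decrease as the base point grows. *)

Section Loads.
Variables (R : numDomainType) (V : finType) (E : rel V) (p : V -> V -> R).
Variable L : nat.

Lemma load_setU1 t (S : {set V}) v x : v \notin S ->
  load E p L t (v |: S) x = load E p L t S x + load E p L t [set v] x.
Proof.
move=> vNS; elim: t x => [|t IH] x /=.
  rewrite !inE; case: (eqVneq x v) => [->|_] /=; first by rewrite (negbTE vNS) add0r.
  by case: (x \in S); rewrite addr0.
by rewrite -big_split /=; apply: eq_bigr => u _; rewrite IH mulrDr.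
Qed.

Hypothesis p_ge0 : forall u v, E u v -> 0 <= p u v.

Lemma load_ge0 t (S : {set V}) x : 0 <= load E p L t S x.
Proof.
elim: t x => [|t IH] x /=; first by case: ifP.
apply: sumr_ge0 => u; rewrite inE => Eux.
by apply: mulr_ge0; [exact: p_ge0 | exact: IH].
Qed.

Lemma load_subset t (S T : {set V}) x :
  S \subset T -> load E p L t S x <= load E p L t T x.
Proof.
move=> sST; elim: t x => [|t IH] x /=.
  by case: ifP => [/(subsetP sST) -> // | _]; case: ifP.
apply: ler_sum => u; rewrite inE => Eux.
by apply: ler_wpM2l; [exact: p_ge0 | exact: IH].
Qed.

End Loads.

(* Concavity of the square root in the form needed: the increment
   sqrt(a + d) - sqrt a for a fixed d >= 0 is antitone in a >= 0.
   Squaring reduces it to (b + d) a <= (a + d) b, i.e. d a <= d b. *)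
Lemma sqrt_increment_antitone (R : rcfType) (a b d : R) :
  0 <= a -> a <= b -> 0 <= d ->
  Num.sqrt (b + d) - Num.sqrt b <= Num.sqrt (a + d) - Num.sqrt a.
Proof.
move=> a_ge0 le_ab d_ge0.
have b_ge0 : 0 <= b by exact: le_trans le_ab.
suff cross : Num.sqrt (b + d) + Num.sqrt a <= Num.sqrt (a + d) + Num.sqrt b by lra.
rewrite -ler_sqr ?nnegrE ?addr_ge0 ?sqrtr_ge0 //.
rewrite !sqrrD !sqr_sqrtr ?addr_ge0 //.
have mixed : Num.sqrt (b + d) * Num.sqrt a <= Num.sqrt (a + d) * Num.sqrt b.
  rewrite -!sqrtrM ?addr_ge0 // ler_sqrt; last by rewrite mulr_ge0 ?addr_ge0.
  nra.
lra.
Qed.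

Section SqrtObjective.
Variables (R : rcfType) (V : finType) (E : rel V) (p : V -> V -> R).
Variables (L tau : nat).
Hypothesis p_ge0 : forall u v, E u v -> 0 <= p u v.

Lemma f_sqrt_subset (S T : {set V}) :
  S \subset T -> f_sqrt E p L tau S <= f_sqrt E p L tau T.
Proof.
move=> sST; apply: ler_sum => x _.
by rewrite ler_sqrt ?load_ge0 // load_subset.
Qed.

Lemma f_sqrt_submodular (S T : {set V}) v : S \subset T -> v \notin T ->
  f_sqrt E p L tau (v |: T) - f_sqrt E p L tau T
  <= f_sqrt E p L tau (v |: S) - f_sqrt E p L tau S.
Proof.
move=> sST vNT.
have vNS : v \notin S by apply: contra vNT; apply: (subsetP sST).
rewrite /f_sqrt -!sumrB; apply: ler_sum => x _.
rewrite !load_setU1 //.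
by apply: sqrt_increment_antitone; rewrite ?load_ge0 ?load_subset.
Qed.

End SqrtObjective.

Theorem mainTheorem5 (R : rcfType) (V : finType) (E : rel V) (p : V -> V -> R)
  (L tau : nat) :
  mobility_graph E p -> (1 <= L)%N -> (1 <= tau)%N ->
  (forall (S : {set V}) (v : V),
      f_sqrt E p L tau S <= f_sqrt E p L tau (v |: S)) /\
  (forall (S T : {set V}) (v : V), S \subset T -> v \notin T ->
      f_sqrt E p L tau (v |: T) - f_sqrt E p L tau T
      <= f_sqrt E p L tau (v |: S) - f_sqrt E p L tau S).
Proof.
move=> [p_unit _] _ _.
have p_ge0 : forall u v, E u v -> 0 <= p u v by move=> u v /p_unit /andP[].
split=> [S v | S T v]; first exact/f_sqrt_subset/subsetUr.
exact: f_sqrt_submodular.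
Qed.
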